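(* Let $A$ be an Archimedean semiprime $f$-algebra and $a\in A$. Then $a^2\le\mu|a|$ for some $\mu\in(0,\infty)$ if and only if for every $x\in A$ there is $\lambda\in(0,\infty)$ with $|ax|\le\lambda|x|$ (i.e., $ax\in A(x)$ for all $x\in A$).
   Context: An $f$-algebra is a real associative algebra that is a vector lattice with $A_+A_+\subseteq A_+$ and such that $a\wedge b=0$ implies $ac\wedge b=ca\wedge b=0$ for all $c\in A_+$; it is semiprime if $0$ is its only nilpotent element. For $x\in A$, $A(x)=\{y\in A: |y|\le\lambda|x|\text{ for some }\lambda\in(0,\infty)\}$. Elements $a$ with $a^2\in A(a)$ are called bounded. *)

From HB Require Import structures.
From mathcomp Require Import all_boot all_order all_algebra.
From mathcomp Require Import reals.
Set Implicit Arguments. Unset Strict Implicit. Unset Printing Implicit Defensive.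
Import Order.TTheory GRing.Theory Num.Theory.
Local Open Scope ring_scope.

Section FAlgebra.
Variables (R : realType) (V : lmodType R).
Variables (mul : V -> V -> V) (le : V -> V -> Prop) (join meet : V -> V -> V).

Definition is_real_algebra : Prop :=
  [/\ forall x y z, mul x (mul y z) = mul (mul x y) z,
      forall x y z, mul (x + y) z = mul x z + mul y z,
      forall x y z, mul x (y + z) = mul x y + mul x z,
      forall (c : R) x y, mul (c *: x) y = c *: mul x y
    & forall (c : R) x y, mul x (c *: y) = c *: mul x y].

Definition is_ordered_vspace : Prop :=
  [/\ forall x, le x x,
      forall x y, le x y -> le y x -> x = y,
      forall x y z, le x y -> le y z -> le x z,
      forall x y z, le x y -> le (x + z) (y + z)
    & forall (c : R) x y, 0 <= c -> le x y -> le (c *: x) (c *: y)].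

Definition is_lattice_ops : Prop :=
  (forall x y, le x (join x y) /\ le y (join x y)) /\
  (forall x y z, le x z -> le y z -> le (join x y) z) /\
  (forall x y, le (meet x y) x /\ le (meet x y) y) /\
  (forall x y z, le z x -> le z y -> le z (meet x y)).

Definition is_vector_lattice : Prop := is_ordered_vspace /\ is_lattice_ops.

Definition positive (x : V) : Prop := le 0 x.

Definition absv (x : V) : V := join x (- x).

Definition is_f_algebra : Prop :=
  [/\ is_real_algebra, is_vector_lattice,
      forall a b, positive a -> positive b -> positive (mul a b)
    & forall a b c, meet a b = 0 -> positive c ->
        meet (mul a c) b = 0 /\ meet (mul c a) b = 0].

Definition archimedean_vl : Prop :=
  forall x y, positive x -> (forall n : nat, le (x *+ n) y) -> x = 0.

(* fpow x n = x^(n+1) *)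
Definition fpow (x : V) (n : nat) : V := iter n (mul x) x.

Definition semiprime : Prop :=
  forall x, (exists n : nat, fpow x n = 0) -> x = 0.

End FAlgebra.

(** Write [a = a⁺ - a⁻] with disjoint positive parts; disjoint positive
    elements multiply to zero, so [a² = (a⁺)² + (a⁻)²] and [|a| <= a⁺ + a⁻].
    Everything rests on a positivity test valid in any semiprime f-algebra:
    [t <= 0] as soon as [b t <= 0] for some [b >= 0] and [u t <= 0] for every
    [u >= 0] with [u b = 0].  Indeed [b t <= 0] forces [b t⁺ = 0], hence
    [(t⁺ b)² = 0] and [t⁺ b = 0]; then [(t⁺)² = t⁺ t <= 0] and [t⁺ = 0].
    Applied with [b = a⁺] and [t = (a⁺)² - μ a⁺] it gives [(a⁺)² <= μ a⁺];
    applied with [b = a⁺] and [t = a⁺ y - μ y] it gives [a⁺ y <= μ y] for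
    [y >= 0]; likewise for [a⁻], and [|a x| <= 3 μ |x|] follows by splitting
    [x = |x| - (|x| - x)] with [0 <= |x| - x <= 2 |x|]. *)
From HB Require Import structures.
From mathcomp Require Import all_boot all_order all_algebra.
From mathcomp Require Import reals.
Set Implicit Arguments. Unset Strict Implicit. Unset Printing Implicit Defensive.
Import Order.TTheory GRing.Theory Num.Theory.
Local Open Scope ring_scope.

Section OrderedVectorSpace.
Variables (R : realType) (V : lmodType R) (le : V -> V -> Prop).
Hypothesis ovs : is_ordered_vspace le.

Lemma subv_ge0 x y : le 0 (y - x) <-> le x y.
Proof.
case: ovs => _ _ _ leD _; split=> [/(leD _ _ x)|/(leD _ _ (- x))].
  by rewrite add0r subrK.
by rewrite subrr.
Qed.

Lemma subv_le0 x y : le (x - y) 0 <-> le x y.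
Proof.
by rewrite -(subv_ge0 (x - y)) -(subv_ge0 x y) sub0r opprB.
Qed.

Lemma levD x y z w : le x y -> le z w -> le (x + z) (y + w).
Proof.
case: ovs => _ _ le_trans leD _ lexy lezw.
apply: (le_trans _ (y + z)); first exact: leD.
by rewrite (addrC y z) (addrC y w); apply: leD.
Qed.

Lemma levN x y : le x y -> le (- y) (- x).
Proof. by move=> /subv_ge0 lexy; apply/subv_ge0; rewrite opprK addrC. Qed.

Lemma gevBl x y : le 0 y -> le (x - y) x.
Proof. by rewrite -(subv_ge0 (x - y)) opprB addrC subrK. Qed.

Lemma addvv_ge0 x : le 0 (x + x) -> le 0 x.
Proof.
case: ovs => _ _ _ _ leZ /(leZ 2^-1); rewrite invr_ge0 ler0n scaler0 => /(_ isT).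
by rewrite -mulr2n -scaler_nat scalerA mulVf ?pnatr_eq0 ?scale1r.
Qed.

End OrderedVectorSpace.

Section VectorLattice.
Variables (R : realType) (V : lmodType R) (le : V -> V -> Prop).
Variables (join meet : V -> V -> V).
Hypotheses (ovs : is_ordered_vspace le) (lat : is_lattice_ops le join meet).

Lemma meetvC x y : meet x y = meet y x.
Proof.
case: ovs lat => _ le_anti _ _ _ [_ [_ [meet_lb meet_glb]]].
have [lex ley] := meet_lb x y; have [ley' lex'] := meet_lb y x.
by apply: le_anti; apply: meet_glb.
Qed.

Lemma meetv_idl x y : le x y -> meet x y = x.
Proof.
case: ovs lat => le_refl le_anti _ _ _ [_ [_ [meet_lb meet_glb]]] lexy.
apply: le_anti; first by case: (meet_lb x y).
by apply: meet_glb; first exact: le_refl.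
Qed.

Lemma meetv_eq0_ge0 x y : meet x y = 0 -> le 0 x /\ le 0 y.
Proof. by case: lat => _ [_ [meet_lb _]] <-; apply: meet_lb. Qed.

Definition pospart (t : V) : V := join t 0.

Definition negpart (t : V) : V := pospart t - t.

Lemma pospart_ge0 t : le 0 (pospart t).
Proof. by case: lat => join_ub _; case: (join_ub t 0). Qed.

Lemma negpart_ge0 t : le 0 (negpart t).
Proof. by case: lat => join_ub _; rewrite (subv_ge0 ovs); case: (join_ub t 0). Qed.

Lemma pospart_sub_negpart t : pospart t - negpart t = t.
Proof. by rewrite /negpart opprB addrC subrK. Qed.

(* With [m := t⁺ ∧ t⁻], both [t] and [0] lie below [t⁺ - m],
   so [t⁺ <= t⁺ - m]. *)
Lemma meet_pospart_negpart t : meet (pospart t) (negpart t) = 0.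
Proof.
case: ovs lat => _ le_anti _ _ _ [_ [join_lub [meet_lb meet_glb]]].
set m := meet _ _; have [lem_pos lem_neg] := meet_lb (pospart t) (negpart t).
apply: le_anti; last first.
  by apply: meet_glb; [apply: pospart_ge0 | apply: negpart_ge0].
suff : le (pospart t) (pospart t - m).
  by rewrite -(subv_ge0 ovs) addrAC subrr (subv_ge0 ovs).
apply: join_lub; last by rewrite (subv_ge0 ovs).
by rewrite -(subv_ge0 ovs) addrAC (subv_ge0 ovs).
Qed.

Lemma absv_le_parts t : le (absv join t) (pospart t + negpart t).
Proof.
case: lat => _ [join_lub _]; apply: join_lub; rewrite -(subv_ge0 ovs).
  have -> : pospart t + negpart t - t = negpart t + negpart t by rewrite addrAC.
  by rewrite -{1}(addr0 0); apply: (levD ovs); apply: negpart_ge0.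
have -> : pospart t + negpart t - - t = pospart t + pospart t.
  by rewrite opprK /negpart -addrA subrK.
by rewrite -{1}(addr0 0); apply: (levD ovs); apply: pospart_ge0.
Qed.

Lemma lev_absv x : le x (absv join x).
Proof. by case: lat => join_ub _; case: (join_ub x (- x)). Qed.

Lemma levN_absv x : le (- x) (absv join x).
Proof. by case: lat => join_ub _; case: (join_ub x (- x)). Qed.

Lemma absv_ge0 x : le 0 (absv join x).
Proof.
apply: (addvv_ge0 ovs); rewrite -(subrr x).
exact: levD (lev_absv x) (levN_absv x).
Qed.

End VectorLattice.

Section RealAlgebra.
Variables (R : realType) (V : lmodType R) (mul : V -> V -> V).
Hypothesis alg : is_real_algebra mul.

Lemma mulvBl x y z : mul (x - y) z = mul x z - mul y z.
Proof.
by case: alg => _ mulDl _ mulZl _; rewrite mulDl -scaleN1r mulZl scaleN1r.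
Qed.

Lemma mulvBr x y z : mul x (y - z) = mul x y - mul x z.
Proof.
by case: alg => _ _ mulDr _ mulZr; rewrite mulDr -scaleN1r mulZr scaleN1r.
Qed.

Lemma mulv0l x : mul 0 x = 0.
Proof. by have := mulvBl 0 0 x; rewrite !subrr. Qed.

Lemma mulv0r x : mul x 0 = 0.
Proof. by have := mulvBr x 0 0; rewrite !subrr. Qed.

End RealAlgebra.

Section OrderedAlgebra.
Variables (R : realType) (V : lmodType R) (mul : V -> V -> V).
Variables (le : V -> V -> Prop) (join meet : V -> V -> V).
Hypotheses (alg : is_real_algebra mul) (ovs : is_ordered_vspace le).
Hypothesis lat : is_lattice_ops le join meet.
Hypothesis mul_ge0 :
  forall a b, positive le a -> positive le b -> positive le (mul a b).

Lemma lev_mul2l c x y : le 0 c -> le x y -> le (mul c x) (mul c y).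
Proof.
move=> c_ge0 le_xy; rewrite -(subv_ge0 ovs) -(mulvBr alg).
by apply: mul_ge0 => //; rewrite /positive (subv_ge0 ovs).
Qed.

Lemma lev_mul2r c x y : le 0 c -> le x y -> le (mul x c) (mul y c).
Proof.
move=> c_ge0 le_xy; rewrite -(subv_ge0 ovs) -(mulvBl alg).
by apply: mul_ge0 => //; rewrite /positive (subv_ge0 ovs).
Qed.

Lemma absv_mul_le a mu :
    (forall y, le 0 y -> le (mul a y) (mu *: y) /\ le (- mul a y) (mu *: y)) ->
  0 <= mu -> forall x, le (absv join (mul a x)) ((mu + mu + mu) *: absv join x).
Proof.
move=> le_ay mu_ge0 x.
case: (ovs) (lat) => le_refl _ le_trans _ le_scale [_ [join_lub _]].
set X := absv join x; have X_ge0 : le 0 X := absv_ge0 ovs lat x.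
have Y_ge0 : le 0 (X - x) by rewrite (subv_ge0 ovs); exact: lev_absv lat x.
have le_Y : le (mu *: X + mu *: (X - x)) ((mu + mu + mu) *: X).
  have -> : (mu + mu + mu) *: X = mu *: X + mu *: (X + X).
    by rewrite scalerDr !scalerDl addrA.
  apply: (levD ovs); first exact: le_refl.
  apply: le_scale => //; apply: (levD ovs); first exact: le_refl.
  exact: levN_absv lat x.
have [le_aX leN_aX] := le_ay X X_ge0; have [le_aY leN_aY] := le_ay _ Y_ge0.
have -> : mul a x = mul a X - mul a (X - x).
  by rewrite -(mulvBr alg) opprB addrC subrK.
apply: join_lub; apply: le_trans le_Y; first exact: (levD ovs).
by rewrite opprB addrC; apply: (levD ovs).
Qed.

End OrderedAlgebra.

Section SemiprimeFAlgebra.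
Variables (R : realType) (V : lmodType R) (mul : V -> V -> V).
Variables (le : V -> V -> Prop) (join meet : V -> V -> V).
Hypotheses (alg : is_real_algebra mul) (ovs : is_ordered_vspace le).
Hypothesis lat : is_lattice_ops le join meet.
Hypothesis mul_ge0 :
  forall a b, positive le a -> positive le b -> positive le (mul a b).
Hypothesis meet_mul_eq0 : forall a b c, meet a b = 0 -> positive le c ->
  meet (mul a c) b = 0 /\ meet (mul c a) b = 0.
Hypothesis sp : semiprime mul.

Lemma meetv_mul2l_eq0 b u w :
  le 0 b -> meet u w = 0 -> meet (mul b u) (mul b w) = 0.
Proof.
move=> b_ge0 /meet_mul_eq0 /(_ b_ge0) [_]; rewrite (meetvC ovs lat).
by move=> /meet_mul_eq0 /(_ b_ge0) [_]; rewrite (meetvC ovs lat).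
Qed.

Lemma disjoint_mulv_eq0 u w : meet u w = 0 -> mul u w = 0.
Proof.
move=> uw0; have [u_ge0 w_ge0] := meetv_eq0_ge0 lat uw0.
have [uww0 _] := meet_mul_eq0 uw0 w_ge0; rewrite (meetvC ovs lat) in uww0.
have [_] := meet_mul_eq0 uww0 u_ge0.
by case: ovs => le_refl _ _ _ _; rewrite (meetv_idl ovs lat (le_refl _)).
Qed.

Lemma sqv_eq0 x : mul x x = 0 -> x = 0.
Proof. by move=> xx0; apply: sp; exists 1%N. Qed.

Lemma mul_pospart_eq0 b t :
  le 0 b -> le (mul b t) 0 -> mul (pospart join t) b = 0.
Proof.
move=> b_ge0; set u := pospart join t; set w := negpart join t.
rewrite -(pospart_sub_negpart join t) (mulvBr alg) (subv_le0 ovs) -/u -/w.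
move=> /(meetv_idl ovs lat).
rewrite meetv_mul2l_eq0 ?(meet_pospart_negpart ovs lat) // => /esym bu0.
case: alg => mulA _ _ _ _; apply: sqv_eq0.
by rewrite -mulA (mulA b u b) bu0 (mulv0l alg) (mulv0r alg).
Qed.

Lemma le0_of_mul_le0 b t : le 0 b -> le (mul b t) 0 ->
  (forall u, le 0 u -> mul u b = 0 -> le (mul u t) 0) -> le t 0.
Proof.
move=> b_ge0 bt_le0 /(_ _ (pospart_ge0 lat t) (mul_pospart_eq0 b_ge0 bt_le0)).
set u := pospart join t; set w := negpart join t.
have uw0 : mul u w = 0 by exact/disjoint_mulv_eq0/(meet_pospart_negpart ovs lat).
rewrite -{1}(pospart_sub_negpart join t) (mulvBr alg) -/u -/w uw0 subr0 => uu_le0.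
have u0 : u = 0.
  case: ovs => _ le_anti _ _ _; apply: sqv_eq0; apply: le_anti uu_le0 _.
  by apply: mul_ge0; exact: pospart_ge0 lat t.
rewrite -(pospart_sub_negpart join t) -/u -/w u0 sub0r -oppr0.
by apply: (levN ovs); exact: negpart_ge0 ovs lat t.
Qed.

Lemma sqv_le_of_disjoint p q mu : meet p q = 0 ->
  le (mul p p + mul q q) (mu *: (p + q)) -> le (mul p p) (mu *: p).
Proof.
move=> pq0 le_sq; have [p_ge0 _] := meetv_eq0_ge0 lat pq0.
have pq_eq0 := disjoint_mulv_eq0 pq0.
case: alg => mulA _ mulDr _ mulZr; rewrite -(subv_le0 ovs).
apply: (le0_of_mul_le0 p_ge0) => [|u _ up0].
  move: (lev_mul2l alg ovs mul_ge0 p_ge0 le_sq).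
  rewrite (mulvBr alg) !mulZr !mulDr !mulA pq_eq0 (mulv0l alg) !addr0.
  by rewrite (subv_le0 ovs).
rewrite (mulvBr alg) mulZr mulA up0 (mulv0l alg) scaler0 subrr.
by case: ovs => le_refl _ _ _ _; apply: le_refl.
Qed.

Lemma mulv_le_of_sqv_le b mu : 0 <= mu -> le 0 b -> le (mul b b) (mu *: b) ->
  forall y, le 0 y -> le (mul b y) (mu *: y).
Proof.
move=> mu_ge0 b_ge0 le_bb y y_ge0; case: alg => mulA _ _ mulZl mulZr.
rewrite -(subv_le0 ovs); apply: (le0_of_mul_le0 b_ge0) => [|u u_ge0 ub0].
  move: (lev_mul2r alg ovs mul_ge0 y_ge0 le_bb).
  by rewrite (mulvBr alg) mulZr mulA mulZl (subv_le0 ovs).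
rewrite (mulvBr alg) mulZr mulA ub0 (mulv0l alg) sub0r -oppr0; apply: (levN ovs).
case: ovs => _ _ _ _ le_scale; rewrite -(scaler0 _ mu).
by apply: le_scale => //; apply: mul_ge0.
Qed.

Lemma sqv_sub_disjoint p q : meet p q = 0 ->
  mul (p - q) (p - q) = mul p p + mul q q.
Proof.
move=> pq0; have qp0 : meet q p = 0 by rewrite (meetvC ovs lat).
rewrite (mulvBl alg) !(mulvBr alg).
by rewrite (disjoint_mulv_eq0 pq0) (disjoint_mulv_eq0 qp0) subr0 sub0r opprK.
Qed.

Lemma sqv_le_absv_mul_le a mu : 0 <= mu ->
    le (mul a a) (mu *: absv join a) ->
  forall y, le 0 y -> le (mul a y) (mu *: y) /\ le (- mul a y) (mu *: y).
Proof.
move=> mu_ge0 le_aa y y_ge0; case: (ovs) => _ _ le_trans _ le_scale.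
set p := pospart join a; set q := negpart join a.
have pq0 : meet p q = 0 := meet_pospart_negpart ovs lat a.
have qp0 : meet q p = 0 by rewrite (meetvC ovs lat).
have [p_ge0 q_ge0] := meetv_eq0_ge0 lat pq0.
have a_def : a = p - q by rewrite pospart_sub_negpart.
have le_sq : le (mul p p + mul q q) (mu *: (p + q)).
  rewrite -sqv_sub_disjoint // -a_def; apply: le_trans le_aa _.
  by apply: le_scale => //; exact: absv_le_parts ovs lat a.
have le_py := mulv_le_of_sqv_le mu_ge0 p_ge0 (sqv_le_of_disjoint pq0 le_sq).
rewrite addrC [p + q]addrC in le_sq.
have le_qy := mulv_le_of_sqv_le mu_ge0 q_ge0 (sqv_le_of_disjoint qp0 le_sq).
rewrite a_def (mulvBl alg) opprB; split.
  by apply: le_trans (le_py y y_ge0); apply: (gevBl ovs); apply: mul_ge0.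
by apply: le_trans (le_qy y y_ge0); apply: (gevBl ovs); apply: mul_ge0.
Qed.

End SemiprimeFAlgebra.

Theorem lemma5 (R : realType) (V : lmodType R) (mul : V -> V -> V)
  (le : V -> V -> Prop) (join meet : V -> V -> V) :
  is_f_algebra mul le join meet ->
  archimedean_vl le ->
  semiprime mul ->
  forall a : V,
    (exists mu : R, 0 < mu /\ le (mul a a) (mu *: absv join a)) <->
    (forall x : V, exists lambda : R,
        0 < lambda /\ le (absv join (mul a x)) (lambda *: absv join x)).
Proof.
move=> [alg [ovs lat] mul_ge0 meet_mul_eq0] _ sp a; split.
  move=> [mu [mu_gt0 le_aa]] x; exists (mu + mu + mu); split.
    by rewrite !addr_gt0.
  apply: (absv_mul_le alg ovs lat _ (ltW mu_gt0)).
  exact: (sqv_le_absv_mul_le alg ovs lat mul_ge0 meet_mul_eq0 sp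
    (ltW mu_gt0) le_aa).
move=> /(_ a) [lambda [lambda_gt0 le_aa]]; exists lambda; split=> //.
by case: ovs => _ _ le_trans _ _; apply: le_trans le_aa; exact: lev_absv lat _.
Qed.
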